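(* Let $m$ balls be placed independently and uniformly at random into $n$ bins, where $m=\Theta(n)$, and let $\mu = m/n$. Let $x>1$ and $k\ge 1$. Then with probability $1-2^{-\Omega(k)}$ there does not exist any $i$ such that the first $i$ bins contain at least $(1+1/x)\, i\mu + kx$ balls.
   Context: The bins are indexed $1,\dots,n$; ''the first $i$ bins'' means bins $1,\dots,i$. The constant in $\Omega(k)$ does not depend on $x,k,n$. *)

From HB Require Import structures.
From mathcomp Require Import all_boot all_order all_algebra.
From mathcomp Require Import reals exp.
Set Implicit Arguments. Unset Strict Implicit. Unset Printing Implicit Defensive.
Import Order.TTheory GRing.Theory Num.Theory.
Local Open Scope ring_scope.

(* An outcome of throwing m balls into n bins: ball b (in 'I_m) lands in bin f b
   (in 'I_n).  Bins 1..n of the paper are the ordinals 0..n-1 here, so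
   "the first i bins" = bins with index < i. *)
Definition load (n m : nat) (f : {ffun 'I_m -> 'I_n}) (i : nat) : nat :=
  #|[set b : 'I_m | (f b < i)%N]|.

Definition bad_event (R : realType) (n m : nat) (x k : R) :
    {set {ffun 'I_m -> 'I_n}} :=
  [set f | [exists i : 'I_n.+1,
     (1 + x^-1) * (i%:R * (m%:R / n%:R)) + k * x <= (load f i)%:R]].

Definition bad_prob (R : realType) (n m : nat) (x k : R) : R :=
  (#|bad_event n m x k|)%:R / (#|{ffun 'I_m -> 'I_n}|)%:R.

(* Write N for the number of bins ([n.+1] below), mu = m / N for the mean load of
   a bin and X_i for the load of the first i bins.  Revealing the bins one at a time, the
   m - X_i balls not yet seen are uniform on the remaining N - i bins, so
   E[X_(i+1) - (i+1) mu | X_i] = (X_i - i mu) (N - i - 1) / (N - i): the process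
   (X_i - i mu) / (N - i) is a martingale.  For |th| <= 1/16 and i < N/2 the process
   exp(th N (X_i - i mu) / (N - i) - 16 mu th^2 i) is a nonnegative supermartingale
   starting at 1, so by the maximal inequality it exceeds e^(k/16) before time N/2
   with probability at most e^(-k/16).  With th = 1/(16 x) an excess
   X_i >= (1 + 1/x) i mu + k x at some i <= N/2 forces this exceedance.  An excess at
   some i > N/2 becomes, after reversing the order of the bins, a deficit of the
   same size on the first N - i < N/2 bins, which th = -1/(16 x) catches in the
   same way.  Hence the probability is at most 2 e^(-k/16) <= 2^(-k/32) once
   k >= 32. *)

From HB Require Import structures.
From mathcomp Require Import all_boot all_order all_algebra.
From mathcomp Require Import reals sequences exp.
From mathcomp Require Import ring lra zify.
Import Order.TTheory GRing.Theory Num.Theory.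
Local Open Scope ring_scope.

Set Implicit Arguments. Unset Strict Implicit. Unset Printing Implicit Defensive.

Section Clamp.
Variables n m : nat.
Implicit Types f g : {ffun 'I_m -> 'I_n.+1}.

(* [clamp k f] leaves the balls of the first [k] bins in place and moves every
   other ball to bin [k]: it is what is revealed by inspecting the first [k] bins,
   so the predicates constant on the fibres of [clamp k] form the filtration. *)
Definition clamp k f : {ffun 'I_m -> 'I_n.+1} := [ffun b => inord (minn (f b) k)].

Lemma clampE k f b : (k <= n)%N -> clamp k f b = minn (f b) k :> nat.
Proof. by move=> kn; rewrite ffunE inordK // ltnS (leq_trans (geq_minr _ _)). Qed.

Lemma clamp_id k f : (k <= n)%N -> clamp k (clamp k f) = clamp k f.
Proof.
by move=> kn; apply/ffunP => b; apply: val_inj; rewrite /= !clampE // -minnA minnn.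
Qed.

Lemma load_clamp k j f f' :
  (j <= k <= n)%N -> clamp k f = clamp k f' -> load f j = load f' j.
Proof.
move=> /andP[jk kn] eq_ff'; apply: eq_card => b; rewrite !inE.
have := congr1 (fun h : {ffun _ -> _} => nat_of_ord (h b)) eq_ff'.
by rewrite /= !clampE // => eq_min; apply/idP/idP; lia.
Qed.

(* The fibre of [clamp k] over [g] is a product over the balls: a ball [b] may lie
   in any bin [j] with [minn j k = g b]. *)
Definition fibre_weight (R : pzSemiRingType) k i (c : 'I_n.+1) (W : R) : R :=
  \sum_(j : 'I_n.+1 | minn j k == c) (if (j < i)%N then W else 1).

Lemma sum_fibre_exp_load (R : comPzRingType) (W : R) k i g : (k <= n)%N ->
  \sum_(f | clamp k f == g) W ^+ load f i = \prod_b fibre_weight k i (g b) W.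
Proof.
move=> kn; rewrite bigA_distr_big_dep /=; apply: eq_big => [f|f _].
  apply/eqP/familyP => [<- b|fib]; first by rewrite -topredE /= clampE.
  by apply/ffunP => b; apply: val_inj; rewrite /= clampE //; apply/eqP/fib.
by rewrite /load -prodr_const big_mkcond; apply: eq_bigr => b _; rewrite inE.
Qed.

Lemma fibre_weight_ge0 (R : numDomainType) (W : R) k i (c : 'I_n.+1) :
  0 <= W -> 0 <= fibre_weight k i c W.
Proof. by move=> W_ge0; apply: sumr_ge0 => j _; case: ifP. Qed.

Lemma fibre_weight_below (R : pzSemiRingType) (W : R) k i (c : 'I_n.+1) :
  (c < k <= i)%N -> fibre_weight k i c W = W.
Proof.
move=> /andP[ck ki]; rewrite /fibre_weight (big_pred1 c) ?(leq_trans ck ki) // => j.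
by rewrite /= -val_eqE; apply/eqP/eqP => /=; lia.
Qed.

Lemma fibre_weight_above (R : pzSemiRingType) (W : R) k i (c : 'I_n.+1) :
  (k < c)%N -> fibre_weight k i c W = 0.
Proof. by move=> kc; rewrite /fibre_weight big_pred0 // => j; apply/eqP; lia. Qed.

Lemma fibre_weight_top (R : pzSemiRingType) (W : R) k i (c : 'I_n.+1) :
  (k <= n)%N -> c = k :> nat ->
  fibre_weight k i c W = \sum_(k <= j < n.+1) (if (j < i)%N then W else 1).
Proof.
move=> kn ck; rewrite /fibre_weight ck big_geq_mkord; apply: eq_bigl => j /=.
by apply/eqP/idP; lia.
Qed.

End Clamp.

Section MaximalInequality.
Variables (R : numDomainType) (T : finType).
Variables (F : nat -> T -> T) (Z : nat -> T -> R) (E : nat -> pred T).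
Variables (I : nat) (L : R).

Definition hit N f := [exists j : 'I_N.+1, E j f].

(* [F i f] is what is known of [f] at time [i]; a predicate is measurable at time
   [i] when it is constant on the fibres of [F i]. *)
Hypothesis Z_ge0 : forall i f, 0 <= Z i f.
Hypothesis E_adapted : forall j i f f',
  (j <= i <= I)%N -> F i f = F i f' -> E j f = E j f'.
Hypothesis Z_supermartingale : forall i (A : pred T), (i < I)%N ->
  (forall f f', F i f = F i f' -> A f = A f') ->
  \sum_(f | A f) Z i.+1 f <= \sum_(f | A f) Z i f.
Hypothesis E_Z : forall i f, (i <= I)%N -> E i f -> L <= Z i f.

Lemma hitS N f : hit N.+1 f = hit N f || E N.+1 f.
Proof.
apply/existsP/orP => [[j Ej]|[/existsP[j Ej]|EN]].
- have /ltnSE := ltn_ord j; rewrite leq_eqVlt => /orP[/eqP ej|jN].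
    by right; rewrite -ej.
  by left; apply/existsP; exists (Ordinal jN).
- by exists (widen_ord (leqnSn _) j).
- by exists ord_max.
Qed.

(* [Z] stopped at the first time [E] holds, its value there lowered to [L]. *)
Lemma sum_stopped_le N : (N <= I)%N ->
  \sum_f (if hit N f then L else Z N f) <= \sum_f Z 0 f.
Proof.
elim: N => [_|N IH NI].
  apply: ler_sum => f _; case: ifP => // /existsP[j].
  by rewrite (ord1 j); apply: E_Z.
apply: le_trans (IH (ltnW NI)).
have hit_adapted f f' : F N f = F N f' -> hit N f = hit N f'.
  move=> eqF; apply: eq_existsb => j; apply: (E_adapted (i := N)) eqF.
  by rewrite -ltnS ltn_ord ltnW.
apply: (@le_trans _ _ (\sum_f (if hit N f then L else Z N.+1 f))).
  apply: ler_sum => f _; rewrite hitS; case: (hit N f) => //=.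
  by case: ifP => // EN; apply: E_Z.
rewrite (bigID (hit N)) [leRHS](bigID (hit N)) /=; apply: lerD.
  by apply: ler_sum => f ->.
have drop_hit i : \sum_(f | ~~ hit N f) (if hit N f then L else Z i f)
                  = \sum_(f | ~~ hit N f) Z i f.
  by apply: eq_bigr => f /negbTE ->.
by rewrite !drop_hit; apply: Z_supermartingale => // f f' /hit_adapted ->.
Qed.

Lemma maximal_inequality : #|[set f | hit I f]|%:R * L <= \sum_f Z 0 f.
Proof.
apply: le_trans (sum_stopped_le (leqnn I)).
rewrite [leRHS](bigID (hit I)) /= -[leLHS]addr0; apply: lerD.
  rewrite -sum1_card natr_sum mulr_suml [leLHS](eq_bigl (hit I)) => [|f]; last first.
    by rewrite inE.
  by apply: ler_sum => f ->; rewrite mul1r.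
by apply: sumr_ge0 => f /negbTE ->.
Qed.

End MaximalInequality.

Lemma expR_le_quadratic (R : realType) (y : R) :
  y <= 1 / 2 -> expR y <= 1 + y + 2 * y ^+ 2.
Proof.
move=> y_le.
have expR_1B_le : expR y * (1 - y) <= 1.
  have := ler_wpM2l (expR_ge0 y) (expR_ge1Dx (- y)).
  by rewrite -expRD subrr expR0.
have y_lt1 : 0 < 1 - y by lra.
rewrite -(ler_pM2r y_lt1); apply: le_trans expR_1B_le _.
have -> : (1 + y + 2 * y ^+ 2) * (1 - y) = 1 + y ^+ 2 * (1 - 2 * y) by ring.
by rewrite lerDl mulr_ge0 ?sqr_ge0 //; lra.
Qed.

Lemma expR_top_cell_le (R : realType) (r q : R) : r <= 1 / 2 -> 0 < q ->
  expR r + (q - 1) <= q * expR ((r + 2 * r ^+ 2) / q).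
Proof.
move=> r_le q_gt0; apply: le_trans (lerD (expR_le_quadratic r_le) (lexx _)) _.
apply: le_trans _ (ler_wpM2l (ltW q_gt0) (expR_ge1Dx _)).
have -> : q * (1 + (r + 2 * r ^+ 2) / q) = q + r + 2 * r ^+ 2.
  by field; rewrite gt_eqF.
lra.
Qed.

Lemma exponent_step (R : realFieldType) (th mu N K s s' r r' : R) :
  r = th * N / (N - K) -> r' = th * N / (N - (K + 1)) ->
  0 <= K -> N <= 2 * (N - K - 1) -> 0 <= mu -> 0 <= s -> 0 <= s' ->
  s + s' = N * mu ->
  (r' - r) * s + (r' + 2 * r' ^+ 2) / (N - K) * s'
    + (- (r' * ((K + 1) * mu)) - 16 * mu * th ^+ 2 * (K + 1))
  <= - (r * (K * mu)) - 16 * mu * th ^+ 2 * K.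
Proof.
move=> r_def r'_def K_ge0 N_le mu_ge0 s_ge0 s'_ge0 s_sum.
have q1_gt0 : 0 < N - (K + 1) by lra.
have q_gt0 : 0 < N - K by lra.
(* The martingale property: the terms linear in [th] cancel exactly. *)
have drift : - (r' * ((K + 1) * mu)) + (r' - r) * s + r' / (N - K) * s'
             + r * (K * mu) = 0.
  have -> : s = N * mu - s' by lra.
  by rewrite r_def r'_def; field; rewrite (gt_eqF q_gt0) (gt_eqF q1_gt0).
have ratio1 : N / (N - (K + 1)) <= 2 by rewrite ler_pdivrMr //; lra.
have ratio : N / (N - K) <= 2 by rewrite ler_pdivrMr //; lra.
have variance : 2 * r' ^+ 2 / (N - K) * s' <= 16 * mu * th ^+ 2.
  have c_ge0 : 0 <= 2 * th ^+ 2 * mu.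
    by apply: mulr_ge0 => //; apply: mulr_ge0; [|exact: sqr_ge0].
  apply: (@le_trans _ _ (2 * r' ^+ 2 / (N - K) * (N * mu))).
    apply: ler_wpM2l; last by lra.
    by apply: divr_ge0; [apply: mulr_ge0 => //; exact: sqr_ge0 | exact: ltW].
  have -> : 2 * r' ^+ 2 / (N - K) * (N * mu)
            = 2 * th ^+ 2 * mu * (N / (N - (K + 1))) ^+ 2 * (N / (N - K)).
    by rewrite r'_def; field; rewrite (gt_eqF q_gt0) (gt_eqF q1_gt0).
  have ratio1_sq : (N / (N - (K + 1))) ^+ 2 <= 4.
    rewrite expr2; have := ler_pM _ _ ratio1 ratio1; rewrite divr_ge0; lra.
  have := ler_pM (mulr_ge0 c_ge0 (sqr_ge0 _)) _ (ler_wpM2l c_ge0 ratio1_sq) ratio.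
  rewrite divr_ge0; lra.
have -> : (r' + 2 * r' ^+ 2) / (N - K) * s'
          = r' / (N - K) * s' + 2 * r' ^+ 2 / (N - K) * s'.
  by field; rewrite gt_eqF.
lra.
Qed.

Lemma sumr_if_card (R : pzSemiRingType) m (P : pred 'I_m) (x y : R) :
  \sum_(b < m) (if P b then x else y) = x * #|P|%:R + y * (m - #|P|)%:R.
Proof.
rewrite (bigID P) /= (eq_bigr (fun=> x)) => [|b ->//].
rewrite [X in _ + X](eq_bigr (fun=> y)) => [|b /negbTE ->//].
have -> : (m - #|P| = #|[predC P]|)%N.
  apply: (@addnI #|P|); rewrite cardC card_ord subnKC //.
  by rewrite -[X in (_ <= X)%N]card_ord max_card.
by rewrite !sumr_const !mulr_natr.
Qed.

Section Supermartingale.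
Variables (R : realType) (n m : nat) (th : R).
Implicit Types f g : {ffun 'I_m -> 'I_n.+1}.

Definition bin_mean : R := m%:R / n.+1%:R.

Definition rho i : R := th * n.+1%:R / (n.+1%:R - i%:R).

Definition supmart i f : R :=
  expR (rho i * ((load f i)%:R - i%:R * bin_mean) - 16 * bin_mean * th ^+ 2 * i%:R).

Lemma bin_mean_ge0 : 0 <= bin_mean.
Proof. by rewrite divr_ge0. Qed.

Lemma supmart0 f : supmart 0 f = 1.
Proof.
rewrite /supmart (_ : load f 0 = 0%N); last by apply: eq_card0 => b; rewrite inE.
by rewrite !(mulr0n, mul0r, mulr0, subrr, subr0, expR0).
Qed.

Lemma sum_fibre_supmart k i g : (k <= n)%N ->
  \sum_(f | clamp k f == g) supmart i f =
  expR (- (rho i * (i%:R * bin_mean)) - 16 * bin_mean * th ^+ 2 * i%:R)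
  * \prod_b fibre_weight k i (g b) (expR (rho i)).
Proof.
move=> kn; rewrite -sum_fibre_exp_load // mulr_sumr; apply: eq_bigr => f _.
by rewrite /supmart -expRM_natl -expRD; congr expR; ring.
Qed.

Section Step.
Variable k : nat.
Hypothesis k_small : (n.+1 <= 2 * (n - k))%N.
Hypothesis th_small : `|th| <= 1 / 16.

Let k_le_n : (k <= n)%N.
Proof. by lia. Qed.

Let k_smallR : n.+1%:R <= 2 * (n.+1%:R - k%:R - 1) :> R.
Proof.
have : (n.+1%:R : R) <= (2 * (n - k))%:R by rewrite ler_nat.
by rewrite natrM natrB // -!natr1; lra.
Qed.

Let rho_succE : rho k.+1 = th * n.+1%:R / (n.+1%:R - (k%:R + 1)).
Proof. by rewrite /rho natr1. Qed.

Lemma rho_succ_le_half : rho k.+1 <= 1 / 2.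
Proof.
have N_gt0 : (0 : R) < n.+1%:R by rewrite ltr0n.
have := k_smallR => N_le.
have q_gt0 : (0 : R) < n.+1%:R - (k%:R + 1) by lra.
have ratio : n.+1%:R / (n.+1%:R - (k%:R + 1)) <= 2 :> R.
  by rewrite ler_pdivrMr //; lra.
have ratio_ge0 : (0 : R) <= n.+1%:R / (n.+1%:R - (k%:R + 1)).
  by rewrite divr_ge0 ?ltW.
rewrite rho_succE -mulrA; apply: le_trans (ler_norm _) _.
rewrite normrM [`|_ / _|]ger0_norm //.
have := ler_pM (normr_ge0 th) ratio_ge0 th_small ratio; lra.
Qed.

Definition step_exponent (c : nat) : R :=
  if (c < k)%N then rho k.+1 - rho k
  else (rho k.+1 + 2 * rho k.+1 ^+ 2) / (n.+1%:R - k%:R).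

Lemma fibre_weight_step (c : 'I_n.+1) :
  fibre_weight k k.+1 c (expR (rho k.+1))
  <= fibre_weight k k c (expR (rho k)) * expR (step_exponent c).
Proof.
rewrite /step_exponent; case: (ltngtP c k) => ck.
- have below_k : (c < k <= k)%N by rewrite ck leqnn.
  have below_k1 : (c < k <= k.+1)%N by rewrite ck leqnSn.
  rewrite (fibre_weight_below _ below_k) (fibre_weight_below _ below_k1).
  by rewrite -expRD addrC subrK.
- by rewrite !fibre_weight_above // mul0r.
have ones i (W : R) : \sum_(i <= j < n.+1) (if (j < i)%N then W else 1) = (n.+1 - i)%:R.
  rewrite (eq_big_nat _ _ (F2 := fun=> 1)) ?sumr_const_nat // => j /andP[ij _].
  by rewrite ltnNge ij.
rewrite !fibre_weight_top // big_ltn // ltnSn /= !ones subSS.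
have -> : ((n - k)%:R : R) = n.+1%:R - k%:R - 1 by rewrite natrB // -natr1; ring.
rewrite natrB ?leqW //; apply: expR_top_cell_le; first exact: rho_succ_le_half.
by rewrite subr_gt0 ltr_nat ltnS.
Qed.

Lemma prod_fibre_weight_step g :
  \prod_b fibre_weight k k.+1 (g b) (expR (rho k.+1))
  <= (\prod_b fibre_weight k k (g b) (expR (rho k)))
     * expR (\sum_b step_exponent (g b)).
Proof.
rewrite expR_sum -big_split /=; apply: ler_prod => b _.
by rewrite fibre_weight_ge0 ?expR_ge0 //=; exact: fibre_weight_step.
Qed.

Lemma sum_step_exponent_le g :
  \sum_b step_exponent (g b)
    + (- (rho k.+1 * (k.+1%:R * bin_mean)) - 16 * bin_mean * th ^+ 2 * k.+1%:R)
  <= - (rho k * (k%:R * bin_mean)) - 16 * bin_mean * th ^+ 2 * k%:R.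
Proof.
rewrite /step_exponent (sumr_if_card (fun b => g b < k)%N) -[k.+1%:R]natr1.
have card_le : (#|(fun b => g b < k)%N| <= m)%N.
  by rewrite -[X in (_ <= X)%N]card_ord max_card.
apply: (exponent_step (th := th) (mu := bin_mean) (N := n.+1%:R) (K := k%:R)
         (r := rho k) (r' := rho k.+1));
  [by rewrite /rho | exact: rho_succE | exact: ler0n | exact: k_smallR
  | exact: bin_mean_ge0 | exact: ler0n | exact: ler0n |].
by rewrite -natrD subnKC // /bin_mean mulrCA divff ?mulr1 // pnatr_eq0.
Qed.

Lemma supmart_fibre_step g :
  \sum_(f | clamp k f == g) supmart k.+1 f <= \sum_(f | clamp k f == g) supmart k f.
Proof.
rewrite !sum_fibre_supmart //.
apply: le_trans (ler_wpM2l (expR_ge0 _) (prod_fibre_weight_step g)) _.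
rewrite [leLHS](mulrC _ (_ * expR _)) -(mulrA _ (expR _)) -expRD [leRHS]mulrC.
apply: ler_wpM2l; first by apply: prodr_ge0 => b _; rewrite fibre_weight_ge0 ?expR_ge0.
by rewrite ler_expR sum_step_exponent_le.
Qed.

Lemma supmart_step (A : pred {ffun 'I_m -> 'I_n.+1}) :
  (forall f f', clamp k f = clamp k f' -> A f = A f') ->
  \sum_(f | A f) supmart k.+1 f <= \sum_(f | A f) supmart k f.
Proof.
move=> A_adapted.
rewrite (partition_big (clamp k) predT) // [leRHS](partition_big (clamp k) predT) //.
apply: ler_sum => g _.
have A_fibre f : A f && (clamp k f == g) = A g && (clamp k f == g).
  case: eqP => [<-|_]; rewrite ?andbF // !andbT.
  exact/A_adapted/esym/clamp_id.
rewrite !(eq_bigl _ _ A_fibre); case: (A g) => /=.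
  exact: supmart_fibre_step.
by rewrite !big_pred0_eq.
Qed.

End Step.

Definition supmart_exceeds (L : R) : {set {ffun 'I_m -> 'I_n.+1}} :=
  [set f | hit (fun i f => L <= supmart i f) (n.+1 %/ 2) f].

Lemma card_supmart_exceeds_le (L : R) : `|th| <= 1 / 16 ->
  #|supmart_exceeds L|%:R * L <= (n.+1 ^ m)%:R.
Proof.
move=> th_small.
have -> : (n.+1 ^ m)%:R = \sum_f supmart 0 f :> R.
  rewrite (eq_bigr (fun=> 1)) => [|f _]; last exact: supmart0.
  by rewrite sumr_const card_ffun !card_ord.
apply: (maximal_inequality (F := @clamp n m)) => //.
- by move=> i f; apply: expR_ge0.
- move=> j i f f' /andP[ji iI] eq_ff' /=.
  by rewrite /supmart (@load_clamp _ _ i j f f') // ji /=; lia.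
- by move=> i A iI; apply: supmart_step => //; lia.
Qed.

End Supermartingale.

Definition rev_bins n m (f : {ffun 'I_m -> 'I_n}) : {ffun 'I_m -> 'I_n} :=
  [ffun b => rev_ord (f b)].

Lemma rev_binsK n m : involutive (@rev_bins n m).
Proof. by move=> f; apply/ffunP => b; rewrite !ffunE rev_ordK. Qed.

Lemma load_rev_bins n m (f : {ffun 'I_m -> 'I_n}) i : (i <= n)%N ->
  (load (rev_bins f) (n - i) + load f i)%N = m.
Proof.
move=> i_le; rewrite /load.
have -> : [set b | (rev_bins f b < n - i)%N] = ~: [set b | (f b < i)%N].
  apply/setP => b; rewrite !inE ffunE /=.
  by have := ltn_ord (f b); case: (ltnP (f b) i) => ? ? /=; lia.
by rewrite addnC cardsC card_ord.
Qed.

Lemma bad_exponent_ge (R : realFieldType) (x k mu t N A : R) :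
  1 < x -> 0 <= k -> 0 <= mu -> 0 <= t -> t < N -> t * mu / x + k * x <= A ->
  k / 16 <= 1 / (16 * x) * N / (N - t) * A - 16 * mu * (1 / (16 * x)) ^+ 2 * t.
Proof.
move=> x_gt1 k_ge0 mu_ge0 t_ge0 t_lt A_ge.
have x_gt0 : 0 < x by lra.
have th_gt0 : 0 < 1 / (16 * x) by rewrite divr_gt0 //; lra.
have A_ge0 : 0 <= A.
  apply: le_trans A_ge; rewrite addr_ge0 ?mulr_ge0 ?divr_ge0 //; lra.
have ratio_ge1 : 1 <= N / (N - t) by rewrite ler_pdivlMr; lra.
have rho_ge : 1 / (16 * x) * A <= 1 / (16 * x) * N / (N - t) * A.
  have -> : 1 / (16 * x) * N / (N - t) * A = 1 / (16 * x) * A * (N / (N - t)).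
    by ring.
  rewrite -[leLHS]mulr1; apply: ler_wpM2l => //.
  by rewrite mulr_ge0 // ltW.
have excess : 1 / (16 * x) * (t * mu / x + k * x) <= 1 / (16 * x) * A.
  by apply: ler_wpM2l => //; exact: ltW.
(* The correction term absorbs exactly the [t * mu / x] part of the excess. *)
have -> : k / 16 = 1 / (16 * x) * (t * mu / x + k * x)
                   - 16 * mu * (1 / (16 * x)) ^+ 2 * t.
  by field; rewrite gt_eqF.
lra.
Qed.

Section BadEvent.
Variables (R : realType) (n m : nat) (x k : R).
Hypotheses (x_gt1 : 1 < x) (k_ge0 : 0 <= k).
Implicit Type f : {ffun 'I_m -> 'I_n.+1}.

Let th : R := 1 / (16 * x).

Definition exceeds_at f i :=
  (1 + x^-1) * (i%:R * bin_mean R n m) + k * x <= (load f i)%:R.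

Lemma supmart_ge_lower f i : (2 * i <= n.+1)%N -> exceeds_at f i ->
  expR (k / 16) <= supmart th i f.
Proof.
move=> i_small bad; rewrite /supmart ler_expR /rho.
apply: bad_exponent_ge => //; rewrite ?ler0n ?bin_mean_ge0 //.
  by rewrite ltr_nat; lia.
by move: bad; rewrite /exceeds_at; lra.
Qed.

Lemma supmart_ge_upper f i : (n.+1 < 2 * i)%N -> (i <= n.+1)%N -> exceeds_at f i ->
  expR (k / 16) <= supmart (- th) (n.+1 - i) (rev_bins f).
Proof.
move=> i_large i_le bad.
set mu := bin_mean R n m; set S : R := (load f i)%:R.
have m_split : m%:R = (n.+1%:R - i%:R) * mu + i%:R * mu.
  by rewrite -mulrDl subrK /mu /bin_mean mulrCA divff ?mulr1 // pnatr_eq0.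
have load_rev : (load (rev_bins f) (n.+1 - i))%:R = m%:R - S :> R.
  by rewrite -[X in X%:R - _](load_rev_bins f i_le) natrD addrK.
rewrite /supmart ler_expR /rho natrB // sqrrN load_rev -/mu.
set t := n.+1%:R - i%:R in m_split *.
have -> : - th * n.+1%:R / (n.+1%:R - t) * (m%:R - S - t * mu)
          = th * n.+1%:R / (n.+1%:R - t) * (t * mu - (m%:R - S)) by ring.
have i_gt0 : (0 : R) < i%:R by rewrite ltr0n; lia.
have t_le_i : t <= i%:R.
  have : (n.+1%:R : R) <= (2 * i)%:R by rewrite ler_nat ltnW.
  by rewrite natrM /t; lra.
have mu_ge0 : 0 <= mu by exact: bin_mean_ge0.
apply: bad_exponent_ge => //.
- by rewrite subr_ge0 ler_nat.
- by rewrite /t ltrBlDr ltrDl.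
have : 0 <= (i%:R - t) * (mu / x).
  by rewrite mulr_ge0 ?subr_ge0 // divr_ge0 // ltW // (lt_trans ltr01 x_gt1).
by move: bad; rewrite /exceeds_at -/mu -/S m_split; lra.
Qed.

Lemma bad_event_sub :
  bad_event n.+1 m x k
    \subset supmart_exceeds n m th (expR (k / 16))
            :|: @rev_bins n.+1 m @^-1: supmart_exceeds n m (- th) (expR (k / 16)).
Proof.
apply/subsetP => f; rewrite inE => /existsP[i bad].
rewrite !inE; have [i_small|i_large] := leqP (2 * i) n.+1.
  apply/orP; left; apply/existsP.
  have i_lt : (i < (n.+1 %/ 2).+1)%N by lia.
  by exists (Ordinal i_lt); apply: supmart_ge_lower.
apply/orP; right; apply/existsP.
have i_lt : (n.+1 - i < (n.+1 %/ 2).+1)%N by lia.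
by exists (Ordinal i_lt); apply: supmart_ge_upper; rewrite // -ltnS.
Qed.

End BadEvent.

Lemma ler_div_two_bounds (R : realFieldType) (b s1 s2 P L : R) :
  0 < P -> 0 < L -> b <= s1 + s2 -> s1 * L <= P -> s2 * L <= P -> b / P <= 2 / L.
Proof.
move=> P_gt0 L_gt0 b_le s1_le s2_le.
rewrite ler_pdivrMr // mulrAC ler_pdivlMr //.
have := ler_wpM2r (ltW L_gt0) b_le; lra.
Qed.

Lemma bad_prob_le (R : realType) n m (x k : R) : 1 < x -> 0 <= k ->
  bad_prob n.+1 m x k <= 2 * expR (- (k / 16)).
Proof.
move=> x_gt1 k_ge0.
set th := 1 / (16 * x); set L := expR (k / 16).
have th_small : `|th| <= 1 / 16.
  have x_gt0 : 0 < x by lra.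
  have th_ge0 : 0 <= th by rewrite divr_ge0 //; lra.
  by rewrite ger0_norm // ler_pdivrMr; lra.
have card_rev : #|@rev_bins n.+1 m @^-1: supmart_exceeds n m (- th) L|
                = #|supmart_exceeds n m (- th) L|.
  by apply: card_preimset; exact: (can_inj (@rev_binsK _ _)).
have card_bad : (#|bad_event n.+1 m x k|
                 <= #|supmart_exceeds n m th L| + #|supmart_exceeds n m (- th) L|)%N.
  rewrite -card_rev.
  apply: leq_trans (subset_leq_card (bad_event_sub n m x_gt1 k_ge0)) _.
  exact: (leq_card_setU _ _).1.
rewrite /bad_prob card_ffun !card_ord expRN -/L.
apply: (ler_div_two_bounds (s1 := #|supmart_exceeds n m th L|%:R)
                           (s2 := #|supmart_exceeds n m (- th) L|%:R)).
- by rewrite ltr0n expn_gt0.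
- exact: expR_gt0.
- by rewrite -natrD ler_nat.
- exact: card_supmart_exceeds_le.
- by apply: card_supmart_exceeds_le; rewrite normrN.
Qed.

Lemma two_expR_le_powR (R : realType) (k : R) :
  32 <= k -> 2 * expR (- (k / 16)) <= powR 2 (- (1 / 32 * k)).
Proof.
move=> k_ge.
have ln2_le1 : ln (2 : R) <= 1.
  rewrite -[leRHS](expRK 1) ler_ln ?posrE ?expR_gt0 //.
  by have := expR_ge1Dx (1 : R); lra.
have two_neq0 : (2 : R) != 0 by rewrite pnatr_eq0.
rewrite /powR (negbTE two_neq0).
apply: (@le_trans _ _ (expR (- (k / 32)))).
  have -> : - (k / 32) = k / 32 + - (k / 16) by lra.
  rewrite expRD; apply: ler_wpM2r; first exact: expR_ge0.
  by have := expR_ge1Dx (k / 32); lra.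
have k32_ge0 : 0 <= k / 32 by lra.
by rewrite ler_expR; have := ler_wpM2l k32_ge0 ln2_le1; rewrite mulr1; lra.
Qed.

Theorem mainTheorem2 (R : realType) (a b : R) (ha : 0 < a) (hab : a <= b) :
  exists c : R, 0 < c /\ exists k0 : R,
    forall (n m : nat), (0 < n)%N ->
      a * n%:R <= m%:R -> m%:R <= b * n%:R ->
      forall x k : R, 1 < x -> 1 <= k -> k0 <= k ->
        bad_prob n m x k <= powR 2 (- (c * k)).
Proof.
(* The bound is uniform in [m]. *)
exists (1 / 32); split; first by lra.
exists 32 => -[//|n] m _ _ _ x k x_gt1 _ k_ge32.
apply: le_trans (bad_prob_le _ _ x_gt1 _) (two_expR_le_powR k_ge32); lra.
Qed.
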